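(* Let $v_2$, $v_3$ and $\delta$ satisfy the standing assumptions described in the context. Then there exist numbers $\ell^*\le 1$ and $\theta^*<2\pi/3$, uniquely determined by the energy (i.e. by $v_2$ and $v_3$), such that every optimal cell $(y_1,\dots,y_6)$ satisfies $|y_i-y_{i-1}|=\ell^*$ and $\theta_i=\theta^*$ for all $i=1,\dots,6$.
   Context: A cell is a $6$-tuple $(y_1,\dots,y_6)\in(\mathbb{R}^3)^6$, indices modulo $6$. Its bonds are the segments $\{y_{i-1},y_i\}$ with lengths $|y_i-y_{i-1}|$, and $\theta_i\in[0,\pi]$ is the bond angle at $y_i$ between the segments $\{y_i,y_{i+1}\}$ and $\{y_i,y_{i-1}\}$. Cell energy: $$E_{\rm cell}(y_1,\dots,y_6)=\tfrac12\sum_{i=1}^6 v_2(|y_i-y_{i-1}|)+\sum_{i=1}^6 v_2(|y_i-y_{i-2}|)+\sum_{i=1}^6 v_3(\theta_i).$$ An optimal cell is a minimizer of $E_{\rm cell}$ on $(\mathbb{R}^3)^6$. Standing assumptions: $v_2:(0,\infty)\to[-1,\infty)$ is continuous, attains its minimum value $-1$ only at $1$, is decreasing on $(0,1)$ and increasing on $[1,\infty)$, and is differentiable on $(5/4,\sqrt3]$ with $v_2'>0$ there; $v_3:[0,\pi]\to[0,\infty)$ is continuous, attains its minimum value $0$ only at $2\pi/3$, and is differentiable at $2\pi/3$. Moreover there is $0<\delta\le 0.2$ with: (i) $v_2(1-\delta)>11+12v_2(\sqrt3)$; (ii) $v_2(1+\delta)>-1+12v_2(\sqrt3)-12v_2(\sqrt3(1-\delta)^2)$;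 (iii) $v_3(\theta)>6+6v_2(\sqrt3)$ whenever $|\theta-2\pi/3|\ge\delta$; (iv) the map $(\ell_1,\ell_2,\theta)\mapsto \frac14 v_2(\ell_1)+\frac14 v_2(\ell_2)+v_2\big((\ell_1^2+\ell_2^2-2\ell_1\ell_2\cos\theta)^{1/2}\big)+v_3(\theta)$ is strictly convex on $\{|\ell_1-1|<\delta,\ |\ell_2-1|<\delta,\ |\theta-2\pi/3|<\delta\}$. *)

From Stdlib Require Import Reals Lra.
Open Scope R_scope.

Record P3 := mkP3 { px : R; py : R; pz : R }.

Definition vsub (a b : P3) : P3 := mkP3 (px a - px b) (py a - py b) (pz a - pz b).
Definition dot (a b : P3) : R := px a * px b + py a * py b + pz a * pz b.
Definition norm3 (a : P3) : R := sqrt (dot a a).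
Definition dist3 (a b : P3) : R := norm3 (vsub a b).

(* A cell is a 6-tuple of points, represented as a function nat -> P3 whose
   values are only used through the index modulo 6: the paper's y_i
   (i = 1..6, indices mod 6) is [y (i mod 6)], with y_6 = y_0. *)
Definition cell := nat -> P3.
Definition pt (y : cell) (i : nat) : P3 := y (i mod 6).
Definition prv (i : nat) : nat := (i + 5)%nat.   (* i - 1 modulo 6 *)
Definition prv2 (i : nat) : nat := (i + 4)%nat.  (* i - 2 modulo 6 *)
Definition nxt (i : nat) : nat := (i + 1)%nat.

Definition bond (y : cell) (i : nat) : R := dist3 (pt y i) (pt y (prv i)).
Definition dist2nd (y : cell) (i : nat) : R := dist3 (pt y i) (pt y (prv2 i)).

Definition angle3 (a b : P3) : R := acos (dot a b / (norm3 a * norm3 b)).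

Definition bond_angle (y : cell) (i : nat) : R :=
  angle3 (vsub (pt y (nxt i)) (pt y i)) (vsub (pt y (prv i)) (pt y i)).

(* Cell energy; indices i = 0..5 represent the paper's i = 1..6. *)
Definition E_cell (v2 v3 : R -> R) (y : cell) : R :=
  (1/2) * (sum_f_R0 (fun i => v2 (bond y i)) 5)
  + sum_f_R0 (fun i => v2 (dist2nd y i)) 5
  + sum_f_R0 (fun i => v3 (bond_angle y i)) 5.

(* Since v2 is only defined on (0,oo), E_cell is defined exactly on cells
   all of whose bond lengths and second-neighbour distances are positive. *)
Definition admissible (y : cell) : Prop :=
  forall i : nat, 0 < bond y i /\ 0 < dist2nd y i.

Definition optimal_cell (v2 v3 : R -> R) (y : cell) : Prop :=
  admissible y /\ forall z : cell, admissible z -> E_cell v2 v3 y <= E_cell v2 v3 z.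

Definition strictly_convex3 (S : R -> R -> R -> Prop) (f : R -> R -> R -> R) : Prop :=
  forall a1 a2 a3 b1 b2 b3 t,
    S a1 a2 a3 -> S b1 b2 b3 -> (a1, a2, a3) <> (b1, b2, b3) -> 0 < t < 1 ->
    f (t * a1 + (1 - t) * b1) (t * a2 + (1 - t) * b2) (t * a3 + (1 - t) * b3)
    < t * f a1 a2 a3 + (1 - t) * f b1 b2 b3.

Definition standing_assumptions (v2 v3 : R -> R) (delta : R) : Prop :=
  (forall x, 0 < x -> continuity_pt v2 x) /\
  (forall x, 0 < x -> -1 <= v2 x) /\
  v2 1 = -1 /\
  (forall x, 0 < x -> x <> 1 -> -1 < v2 x) /\
  (forall x y, 0 < x -> x <= y -> y < 1 -> v2 y <= v2 x) /\
  (forall x y, 1 <= x -> x <= y -> v2 x <= v2 y) /\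
  (forall x, 5/4 < x <= sqrt 3 -> exists d, derivable_pt_lim v2 x d /\ 0 < d) /\
  (forall x, 0 <= x <= PI -> limit1_in v3 (fun t => 0 <= t <= PI) (v3 x) x) /\
  (forall x, 0 <= x <= PI -> 0 <= v3 x) /\
  v3 (2 * PI / 3) = 0 /\
  (forall x, 0 <= x <= PI -> x <> 2 * PI / 3 -> 0 < v3 x) /\
  (exists d, derivable_pt_lim v3 (2 * PI / 3) d) /\
  (* delta and conditions (i)-(iv) *)
  0 < delta <= 1/5 /\
  v2 (1 - delta) > 11 + 12 * v2 (sqrt 3) /\
  v2 (1 + delta) > -1 + 12 * v2 (sqrt 3) - 12 * v2 (sqrt 3 * (1 - delta) ^ 2) /\
  (forall th, 0 <= th <= PI -> Rabs (th - 2 * PI / 3) >= delta ->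
     v3 th > 6 + 6 * v2 (sqrt 3)) /\
  strictly_convex3
    (fun l1 l2 th => Rabs (l1 - 1) < delta /\ Rabs (l2 - 1) < delta /\
                     Rabs (th - 2 * PI / 3) < delta)
    (fun l1 l2 th => (1/4) * v2 l1 + (1/4) * v2 l2
        + v2 (sqrt (l1 ^ 2 + l2 ^ 2 - 2 * l1 * l2 * cos th)) + v3 th).

From Stdlib Require Import Reals Lra Lia Classical.
From Coquelicot Require Import Coquelicot.
Open Scope R_scope.

(* By the law of cosines each second-neighbour distance is a function of the
   two bonds at a site and the angle between them, so the energy is a sum of six
   site energies [F (l_{i+1}, l_i, theta_i)].  Chair-shaped cells realise every
   site triple [(l, l, theta)] with [l > 0] and [0 < theta <= 2 PI / 3]; comparing
   with them, conditions (i)-(iii) confine the bonds and angles of an optimal cell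
   to the box where [F] is strictly convex.  Jensen's inequality then forces all
   sites to coincide, so an optimal cell is a chair whose [(l, theta)] minimises
   [F (l, l, theta)] among chairs, and strict convexity makes that minimiser
   unique.  Finally [l <= 1] because [v2] increases beyond [1], and
   [theta < 2 PI / 3] because [v3'(2 PI / 3) = 0] while the second-neighbour term
   has positive [theta]-derivative there. *)

Lemma PI_gt_3 : 3 < PI.
Proof. pose proof PI2_3_2. lra. Qed.

Lemma cos_2PI_3 : cos (2 * PI / 3) = -1/2.
Proof. replace (2 * PI / 3) with (2 * (PI / 3)) by field. apply cos_2PI3. Qed.

Lemma sqrt3_bounds : 1.7 < sqrt 3 < 1.75.
Proof. pose proof (sqrt_sqrt 3 ltac:(lra)). pose proof Rlt_sqrt3_0. split; nra. Qed.

Lemma lt6_cases (P : nat -> Prop) :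
  P 0%nat -> P 1%nat -> P 2%nat -> P 3%nat -> P 4%nat -> P 5%nat ->
  forall i, (i < 6)%nat -> P i.
Proof. intros. destruct i as [|[|[|[|[|[|m]]]]]]; auto; lia. Qed.

Lemma mod6_le5 i : (i mod 6 <= 5)%nat.
Proof. pose proof (Nat.mod_upper_bound i 6). lia. Qed.

Lemma dot_self_nonneg a : 0 <= dot a a.
Proof. unfold dot. nra. Qed.

Lemma norm3_sq a : norm3 a ^ 2 = dot a a.
Proof. unfold norm3. rewrite pow2_sqrt; [reflexivity | apply dot_self_nonneg]. Qed.

Lemma dist3_sym a b : dist3 a b = dist3 b a.
Proof. unfold dist3, norm3, vsub, dot; simpl. f_equal. ring. Qed.

Lemma dot_Cauchy_Schwarz u w : dot u w ^ 2 <= dot u u * dot w w.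
Proof.
  destruct u as [a b c], w as [d e f]; unfold dot; simpl.
  assert (E : (a*a+b*b+c*c)*(d*d+e*e+f*f) - (a*d+b*e+c*f)^2
    = (a*e-b*d)^2 + (a*f-c*d)^2 + (b*f-c*e)^2) by ring.
  pose proof (pow2_ge_0 (a*e-b*d)). pose proof (pow2_ge_0 (a*f-c*d)).
  pose proof (pow2_ge_0 (b*f-c*e)). lra.
Qed.

Lemma cos_angle3 u w : 0 < norm3 u -> 0 < norm3 w ->
  cos (angle3 u w) * (norm3 u * norm3 w) = dot u w.
Proof.
  intros Hu Hw. unfold angle3.
  pose proof (dot_Cauchy_Schwarz u w) as Hcs. rewrite <- !norm3_sq in Hcs.
  set (p := norm3 u * norm3 w) in *. assert (Hp : 0 < p) by (unfold p; nra).
  assert (Hb : - p <= dot u w <= p) by (unfold p in *; split; nra).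
  rewrite cos_acos; [field; lra|].
  split; apply (Rmult_le_reg_r p); try lra; unfold Rdiv; rewrite Rmult_assoc, Rinv_l; lra.
Qed.

Lemma law_of_cosines a b c : 0 < dist3 a b -> 0 < dist3 c b ->
  dist3 a c = sqrt (dist3 a b ^ 2 + dist3 c b ^ 2
                    - 2 * dist3 a b * dist3 c b * cos (angle3 (vsub a b) (vsub c b))).
Proof.
  unfold dist3. intros Hab Hcb.
  replace (2 * _ * _ * _) with
    (2 * (cos (angle3 (vsub a b) (vsub c b)) * (norm3 (vsub a b) * norm3 (vsub c b)))) by ring.
  rewrite cos_angle3, !norm3_sq by assumption.
  unfold norm3 at 1. f_equal. unfold vsub, dot; simpl. ring.
Qed.

Lemma pt_add6 y i : pt y (i + 6) = pt y i.
Proof. unfold pt. replace (i + 6)%nat with (i + 1 * 6)%nat by lia. now rewrite Nat.Div0.mod_add. Qed.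

Lemma pt_mod6 y i c : pt y (i mod 6 + c) = pt y (i + c).
Proof. unfold pt. now rewrite Nat.Div0.add_mod_idemp_l. Qed.

Lemma bond_mod6 y i : bond y i = bond y (i mod 6).
Proof.
  unfold bond, prv. rewrite pt_mod6. unfold pt. now rewrite Nat.Div0.mod_mod.
Qed.

Lemma bond_angle_mod6 y i : bond_angle y i = bond_angle y (i mod 6).
Proof.
  unfold bond_angle, nxt, prv. rewrite !pt_mod6. unfold pt. now rewrite Nat.Div0.mod_mod.
Qed.

Lemma dist2nd_shift y k : dist2nd y k = dist2nd y (nxt (k + 5)).
Proof.
  unfold dist2nd, nxt, prv2.
  replace (k + 5 + 1)%nat with (k + 6)%nat by lia.
  replace (k + 6 + 4)%nat with ((k + 4) + 6)%nat by lia.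
  now rewrite !pt_add6.
Qed.

Lemma bond_angle_bound y i : 0 <= bond_angle y i <= PI.
Proof. apply acos_bound. Qed.

Lemma dist2nd_nxt y i : 0 < bond y (nxt i) -> 0 < bond y i ->
  dist2nd y (nxt i) = sqrt (bond y (nxt i) ^ 2 + bond y i ^ 2
                            - 2 * bond y (nxt i) * bond y i * cos (bond_angle y i)).
Proof.
  assert (E1 : bond y (nxt i) = dist3 (pt y (nxt i)) (pt y i)).
  { unfold bond, prv, nxt. replace (i + 1 + 5)%nat with (i + 6)%nat by lia. now rewrite pt_add6. }
  assert (E2 : bond y i = dist3 (pt y (prv i)) (pt y i)) by apply dist3_sym.
  assert (E3 : dist2nd y (nxt i) = dist3 (pt y (nxt i)) (pt y (prv i))).
  { unfold dist2nd, prv2, prv, nxt. now replace (i + 1 + 4)%nat with (i + 5)%nat by lia. }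
  rewrite E1, E2, E3. apply law_of_cosines.
Qed.

Definition site_energy (v2 v3 : R -> R) (l1 l2 th : R) : R :=
  (1/4) * v2 l1 + (1/4) * v2 l2 + v2 (sqrt (l1 ^ 2 + l2 ^ 2 - 2 * l1 * l2 * cos th)) + v3 th.

(* Each bond is shared by two sites and each second-neighbour distance is the
   third side of the triangle at exactly one site. *)
Lemma E_cell_site_sum v2 v3 y : admissible y ->
  E_cell v2 v3 y =
  sum_f_R0 (fun i => site_energy v2 v3 (bond y (nxt i)) (bond y i) (bond_angle y i)) 5.
Proof.
  intros Ha. unfold site_energy.
  assert (D : forall i, sqrt (bond y (nxt i) ^ 2 + bond y i ^ 2
                - 2 * bond y (nxt i) * bond y i * cos (bond_angle y i)) = dist2nd y (nxt i)).
  { intros i. symmetry. apply dist2nd_nxt; apply Ha. }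
  cbn [sum_f_R0]. rewrite !D. unfold E_cell. cbn [sum_f_R0 nxt Nat.add].
  change (bond y 6) with (bond y 0). change (dist2nd y 6) with (dist2nd y 0). lra.
Qed.

Lemma E_cell_regular v2 v3 y l th : admissible y ->
  (forall i, bond y i = l /\ bond_angle y i = th) ->
  E_cell v2 v3 y = 6 * site_energy v2 v3 l l th.
Proof.
  intros Ha Hy. rewrite E_cell_site_sum by exact Ha.
  rewrite (sum_eq _ (fun _ => site_energy v2 v3 l l th)), sum_cte.
  - simpl INR. ring.
  - intros i _. destruct (Hy i) as [-> ->]. now rewrite (proj1 (Hy (nxt i))).
Qed.

Definition chair (r h : R) : cell := fun k =>
  match k with
  | 0%nat => mkP3 r 0 h
  | 1%nat => mkP3 (r / 2) (r * sqrt 3 / 2) (- h)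
  | 2%nat => mkP3 (- r / 2) (r * sqrt 3 / 2) h
  | 3%nat => mkP3 (- r) 0 (- h)
  | 4%nat => mkP3 (- r / 2) (- (r * sqrt 3 / 2)) h
  | _ => mkP3 (r / 2) (- (r * sqrt 3 / 2)) (- h)
  end.

Lemma chair_bond r h i : bond (chair r h) i = sqrt (r ^ 2 + 4 * h ^ 2).
Proof.
  rewrite bond_mod6. pose proof (sqrt_sqrt 3 ltac:(lra)).
  apply (lt6_cases (fun k => bond (chair r h) k = sqrt (r ^ 2 + 4 * h ^ 2)));
    [..| apply Nat.mod_upper_bound; lia];
    unfold bond, dist3, norm3, pt, prv, vsub, dot; simpl; f_equal; nra.
Qed.

Lemma chair_dist2nd r h i : dist2nd (chair r h) i = sqrt (3 * r ^ 2).
Proof.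
  assert (E : dist2nd (chair r h) i = dist2nd (chair r h) (i mod 6)).
  { unfold dist2nd, prv2. rewrite pt_mod6. unfold pt. now rewrite Nat.Div0.mod_mod. }
  rewrite E. pose proof (sqrt_sqrt 3 ltac:(lra)).
  apply (lt6_cases (fun k => dist2nd (chair r h) k = sqrt (3 * r ^ 2)));
    [..| apply Nat.mod_upper_bound; lia];
    unfold dist2nd, dist3, norm3, pt, prv2, vsub, dot; simpl; f_equal; nra.
Qed.

(* A chair with bond length [l] has bond angle [th] when its projection on the
   plane is a regular hexagon of circumradius [r] with [3 r^2 = l^2 (2 - 2 cos th)];
   the height [h] then exists exactly when [cos th >= -1/2]. *)
Lemma regular_cell_energy v2 v3 l th : 0 < l -> 0 < th <= 2 * PI / 3 ->
  exists z, admissible z /\ E_cell v2 v3 z = 6 * site_energy v2 v3 l l th.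
Proof.
  intros Hl Hth. pose proof PI_gt_3.
  assert (Hc1 : cos th < 1) by (rewrite <- cos_0; apply cos_decreasing_1; lra).
  assert (Hc2 : -1/2 <= cos th) by (rewrite <- cos_2PI_3; apply cos_decr_1; lra).
  set (r := l * sqrt ((2 - 2 * cos th) / 3)).
  assert (Hr : 3 * r ^ 2 = l ^ 2 + l ^ 2 - 2 * l * l * cos th).
  { unfold r. rewrite Rpow_mult_distr, pow2_sqrt by lra. field. }
  set (h := sqrt (l ^ 2 - r ^ 2) / 2).
  assert (Hh : r ^ 2 + 4 * h ^ 2 = l ^ 2).
  { unfold h. replace (4 * (sqrt (l ^ 2 - r ^ 2) / 2) ^ 2) with (sqrt (l ^ 2 - r ^ 2) ^ 2) by field.
    rewrite pow2_sqrt by nra. ring. }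
  assert (Hb : forall i, bond (chair r h) i = l).
  { intros i. rewrite chair_bond, Hh. apply sqrt_pow2. lra. }
  assert (Hd : forall i, dist2nd (chair r h) i = sqrt (l ^ 2 + l ^ 2 - 2 * l * l * cos th)).
  { intros i. now rewrite chair_dist2nd, Hr. }
  assert (Hdpos : 0 < sqrt (l ^ 2 + l ^ 2 - 2 * l * l * cos th)).
  { apply sqrt_lt_R0. assert (0 < l * l) by nra. nra. }
  assert (Ha : admissible (chair r h)) by (intros i; rewrite Hb, Hd; lra).
  assert (Ht : forall i, bond_angle (chair r h) i = th).
  { intros i. pose proof (dist2nd_nxt (chair r h) i) as Hc.
    rewrite !Hb, Hd in Hc. specialize (Hc Hl Hl).
    pose proof (COS_bound (bond_angle (chair r h) i)). assert (0 < l * l) by nra.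
    apply sqrt_inj in Hc; [| nra | nra].
    apply cos_inj; [apply bond_angle_bound | lra |].
    apply (Rmult_eq_reg_l (2 * l * l)); [lra | nra]. }
  exists (chair r h). split; [exact Ha|].
  apply E_cell_regular; [exact Ha|]. intros i. now rewrite Hb, Ht.
Qed.

Lemma sum_f_R0_ge_term (g : nat -> R) m n j :
  (forall i, (i <= n)%nat -> m <= g i) -> (j <= n)%nat ->
  g j + INR n * m <= sum_f_R0 g n.
Proof.
  induction n as [|n IH]; intros Hm Hj.
  - replace j with 0%nat by lia. simpl. lra.
  - rewrite S_INR. cbn [sum_f_R0].
    destruct (Nat.eq_dec j (S n)) as [->|Hne].
    + assert (INR (S n) * m <= sum_f_R0 g n).
      { rewrite Rmult_comm, <- sum_cte. apply sum_Rle. intros i Hi. apply Hm. lia. }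
      rewrite S_INR in *. lra.
    + pose proof (IH (fun i Hi => Hm i ltac:(lia)) ltac:(lia)). pose proof (Hm (S n) (le_n _)). lra.
Qed.

Definition mean (g : nat -> R) (n : nat) : R := sum_f_R0 g n / INR (S n).

Lemma mean_const g x n : (forall i, (i <= n)%nat -> g i = x) -> mean g n = x.
Proof.
  intros Hg. unfold mean. rewrite (sum_eq g (fun _ => x)) by exact Hg.
  rewrite sum_cte. field. apply not_0_INR. lia.
Qed.

Lemma mean_S n : exists t, 0 < t < 1 /\
  (forall x y, INR (S (S n)) * (t * x + (1 - t) * y) = INR (S n) * x + y) /\
  forall g, mean g (S n) = t * mean g n + (1 - t) * g (S n).
Proof.
  pose proof (pos_INR n) as Hn. rewrite !S_INR.
  exists ((INR n + 1) / (INR n + 1 + 1)). repeat split.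
  - apply Rdiv_lt_0_compat; lra.
  - apply (Rmult_lt_reg_r (INR n + 1 + 1)); [lra|]. field_simplify; lra.
  - intros x y. field. lra.
  - intros g. unfold mean. cbn [sum_f_R0]. rewrite !S_INR. field. lra.
Qed.

Definition convex3 (K : R -> R -> R -> Prop) : Prop :=
  forall a1 a2 a3 b1 b2 b3 t,
    K a1 a2 a3 -> K b1 b2 b3 -> 0 < t < 1 ->
    K (t * a1 + (1 - t) * b1) (t * a2 + (1 - t) * b2) (t * a3 + (1 - t) * b3).

Lemma strictly_convex3_le K F : strictly_convex3 K F ->
  forall a1 a2 a3 b1 b2 b3 t, K a1 a2 a3 -> K b1 b2 b3 -> 0 < t < 1 ->
  F (t * a1 + (1 - t) * b1) (t * a2 + (1 - t) * b2) (t * a3 + (1 - t) * b3)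
  <= t * F a1 a2 a3 + (1 - t) * F b1 b2 b3.
Proof.
  intros HF a1 a2 a3 b1 b2 b3 t Ha Hb Ht.
  destruct (classic ((a1, a2, a3) = (b1, b2, b3))) as [E|N].
  - injection E as -> -> ->. rewrite !(Rplus_comm (t * _)), <- !Rmult_plus_distr_r.
    replace (1 - t + t) with 1 by ring. rewrite !Rmult_1_l. lra.
  - now apply Rlt_le, HF.
Qed.

Section Jensen.

Variables (K : R -> R -> R -> Prop) (F : R -> R -> R -> R) (a b c : nat -> R).
Hypothesis K_convex : convex3 K.
Hypothesis F_strictly_convex : strictly_convex3 K F.

Lemma mean_in_convex3 n : (forall i, (i <= n)%nat -> K (a i) (b i) (c i)) ->
  K (mean a n) (mean b n) (mean c n).
Proof.
  induction n as [|n IH]; intros HK.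
  - unfold mean. simpl. rewrite !Rdiv_1_r. apply HK. lia.
  - destruct (mean_S n) as (t & Ht & _ & Hm). rewrite !Hm.
    apply K_convex; [apply IH; intros; apply HK|apply HK|]; auto.
Qed.

Lemma jensen3_strict n : (forall i, (i <= n)%nat -> K (a i) (b i) (c i)) ->
  (exists i, (i <= n)%nat /\ (a i, b i, c i) <> (a 0%nat, b 0%nat, c 0%nat)) ->
  INR (S n) * F (mean a n) (mean b n) (mean c n) < sum_f_R0 (fun i => F (a i) (b i) (c i)) n.
Proof.
  induction n as [|n IH]; intros HK [j [Hj Hne]].
  - replace j with 0%nat in Hne by lia. congruence.
  - destruct (mean_S n) as (t & Ht & Hw & Hm). rewrite !Hm. cbn [sum_f_R0].
    assert (Hn : forall i, (i <= n)%nat -> K (a i) (b i) (c i)) by auto.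
    pose proof (pos_INR (S (S n))).
    destruct (classic (exists i, (i <= n)%nat /\ (a i, b i, c i) <> (a 0%nat, b 0%nat, c 0%nat)))
      as [Hex|Hall].
    + pose proof (strictly_convex3_le K F F_strictly_convex _ _ _ _ _ _ t
                    (mean_in_convex3 n Hn) (HK (S n) (le_n _)) Ht).
      pose proof (IH Hn Hex).
      eapply Rle_lt_trans; [apply Rmult_le_compat_l; eassumption|]. rewrite Hw. lra.
    + assert (H0 : forall i, (i <= n)%nat -> (a i, b i, c i) = (a 0%nat, b 0%nat, c 0%nat)).
      { intros i Hi. apply NNPP. intros N. apply Hall. eauto. }
      assert (Hm0 : mean a n = a 0%nat /\ mean b n = b 0%nat /\ mean c n = c 0%nat).
      { repeat split; apply mean_const; intros i Hi; now injection (H0 i Hi). }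
      destruct Hm0 as (-> & -> & ->).
      assert (HneS : (a 0%nat, b 0%nat, c 0%nat) <> (a (S n), b (S n), c (S n))).
      { intros E. apply Hne. destruct (Nat.eq_dec j (S n)) as [->|]; [now rewrite E | apply H0; lia]. }
      pose proof (F_strictly_convex _ _ _ _ _ _ t (HK 0%nat ltac:(lia)) (HK (S n) (le_n _)) HneS Ht).
      assert (Hsum : sum_f_R0 (fun i => F (a i) (b i) (c i)) n = INR (S n) * F (a 0%nat) (b 0%nat) (c 0%nat)).
      { rewrite (sum_eq _ (fun _ => F (a 0%nat) (b 0%nat) (c 0%nat))), sum_cte; [ring|].
        intros i Hi. now injection (H0 i Hi) as -> -> ->. }
      eapply Rlt_le_trans; [apply Rmult_lt_compat_l; [apply lt_0_INR; lia | eassumption]|]. rewrite Hw, Hsum. lra.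
Qed.

End Jensen.

Lemma derivable_pt_lim_pos_left f x d : derivable_pt_lim f x d -> 0 < d ->
  forall eta, 0 < eta -> exists h, - eta < h < 0 /\ f (x + h) < f x.
Proof.
  intros Hd Hpos eta Heta. destruct (Hd (d / 2) ltac:(lra)) as [[del Hdel] Hlim]. simpl in Hlim.
  set (h := - Rmin del eta / 2).
  assert (Hm : 0 < Rmin del eta <= del /\ Rmin del eta <= eta)
    by (split; [split; [apply Rmin_pos|apply Rmin_l]|apply Rmin_r]; lra).
  exists h. split; [unfold h; lra|].
  assert (Hh : Rabs h < del) by (rewrite Rabs_left; unfold h; lra).
  specialize (Hlim h ltac:(unfold h; lra) Hh). apply Rabs_def2 in Hlim.
  assert (Hq : f (x + h) - f x = (f (x + h) - f x) / h * h) by (field; unfold h; lra).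
  assert (h < 0) by (unfold h; lra). nra.
Qed.

Lemma third_side_lower_bound delta a b th : 0 < delta <= 1/5 ->
  1 - delta < a -> 1 - delta < b -> Rabs (th - 2 * PI / 3) < delta ->
  sqrt 3 * (1 - delta) ^ 2 <= sqrt (a ^ 2 + b ^ 2 - 2 * a * b * cos th).
Proof.
  intros Hd Ha Hb Ht. apply Rabs_def2 in Ht. pose proof PI_gt_3. pose proof sqrt3_bounds.
  set (m := 1 - delta) in *.
  set (k := 1/2 - delta ^ 2 / 4 - sqrt 3 * delta / 2).
  assert (Hc : cos th <= - k).
  { assert (Hmono : cos th <= cos (2 * PI / 3 - delta)) by (apply cos_decr_1; lra).
    rewrite cos_minus, cos_2PI_3 in Hmono.
    replace (2 * PI / 3) with (2 * (PI / 3)) in Hmono by field. rewrite sin_2PI3 in Hmono.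
    pose proof (sin_lt_x delta ltac:(lra)).
    pose proof (cos_bound delta 0 ltac:(lra) ltac:(lra)) as [Hcos _].
    unfold cos_approx, cos_term in Hcos. simpl in Hcos.
    unfold k. nra. }
  assert (Hab : m * m <= a * b) by (unfold m in *; nra).
  assert (Hk : 3 * (m * m) <= 2 + 2 * k) by (unfold k, m; nra).
  assert (HX : 3 * (m ^ 2) ^ 2 <= a ^ 2 + b ^ 2 - 2 * a * b * cos th).
  { replace (a ^ 2 + b ^ 2 - 2 * a * b * cos th) with ((a - b) ^ 2 + 2 * (a * b) * (1 - cos th)) by ring.
    assert (0 <= m * m) by nra. pose proof (pow2_ge_0 (a - b)).
    assert ((m * m) * (3 * (m * m)) <= (a * b) * (2 + 2 * k)) by nra.
    simpl. nra. }
  rewrite <- (sqrt_pow2 (m ^ 2)) by (apply pow_le; unfold m; lra).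
  rewrite <- sqrt_mult by (try apply pow2_ge_0; lra). apply sqrt_le_1_alt. lra.
Qed.

Definition near_ideal (delta l1 l2 th : R) : Prop :=
  Rabs (l1 - 1) < delta /\ Rabs (l2 - 1) < delta /\ Rabs (th - 2 * PI / 3) < delta.

Lemma near_ideal_convex delta : convex3 (near_ideal delta).
Proof.
  intros a1 a2 a3 b1 b2 b3 t (A1 & A2 & A3) (B1 & B2 & B3) Ht.
  apply Rabs_def2 in A1, A2, A3, B1, B2, B3.
  repeat split; apply Rabs_def1; nra.
Qed.

Section CellEnergy.

Variables v2 v3 : R -> R.

Hypothesis v2_ge_m1 : forall x, 0 < x -> -1 <= v2 x.
Hypothesis v2_at_1 : v2 1 = -1.
Hypothesis v2_gt_m1 : forall x, 0 < x -> x <> 1 -> -1 < v2 x.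
Hypothesis v2_decr : forall x y, 0 < x -> x <= y -> y < 1 -> v2 y <= v2 x.
Hypothesis v2_incr : forall x y, 1 <= x -> x <= y -> v2 x <= v2 y.
Hypothesis v2_deriv_pos :
  forall x, 5/4 < x <= sqrt 3 -> exists d, derivable_pt_lim v2 x d /\ 0 < d.
Hypothesis v3_ge_0 : forall x, 0 <= x <= PI -> 0 <= v3 x.
Hypothesis v3_at_ideal : v3 (2 * PI / 3) = 0.
Hypothesis v3_gt_0 : forall x, 0 <= x <= PI -> x <> 2 * PI / 3 -> 0 < v3 x.
Hypothesis v3_derivable : exists d, derivable_pt_lim v3 (2 * PI / 3) d.

Notation F := (site_energy v2 v3).

Lemma v3_derive_ideal : derivable_pt_lim v3 (2 * PI / 3) 0.
Proof.
  destruct v3_derivable as [d Hd]. pose proof PI_gt_3. pose proof PI_4.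
  replace 0 with (derive_pt v3 (2 * PI / 3) (exist _ d Hd)); [exact Hd|].
  apply (deriv_minimum _ (2 * PI / 3 - 1) (2 * PI / 3 + 1)); try lra.
  intros x Hx1 Hx2. rewrite v3_at_ideal. apply v3_ge_0. lra.
Qed.

Lemma site_energy_opening_angle l th : 1 <= 3 * l ^ 2 -> 2 * PI / 3 < th <= PI ->
  F l l (2 * PI / 3) < F l l th.
Proof.
  intros Hl Hth. pose proof PI_gt_3. unfold site_energy.
  assert (Hc : cos th <= -1/2) by (rewrite <- cos_2PI_3; apply cos_decr_1; lra).
  rewrite cos_2PI_3, v3_at_ideal.
  assert (H1 : 1 <= sqrt (l ^ 2 + l ^ 2 - 2 * l * l * (-1/2))).
  { rewrite <- sqrt_1. apply sqrt_le_1_alt. lra. }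
  assert (H2 : sqrt (l ^ 2 + l ^ 2 - 2 * l * l * (-1/2)) <= sqrt (l ^ 2 + l ^ 2 - 2 * l * l * cos th)).
  { apply sqrt_le_1_alt. assert (0 <= l * l) by nra. nra. }
  pose proof (v2_incr _ _ H1 H2). pose proof (v3_gt_0 th ltac:(lra) ltac:(lra)). lra.
Qed.

(* [v3] is stationary at [2 PI / 3] while the second-neighbour term strictly
   increases with the angle there, so closing the angle a little lowers [F]. *)
Lemma site_energy_closing_angle l : 5/4 < sqrt 3 * l -> l <= 1 ->
  exists th, 2 * PI / 3 - 1 < th < 2 * PI / 3 /\ F l l th < F l l (2 * PI / 3).
Proof.
  intros Hl Hl1. pose proof PI_gt_3. pose proof PI_4. pose proof sqrt3_bounds.
  assert (Hl0 : 0 < l) by nra.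
  set (t0 := 2 * PI / 3).
  set (g := fun t => l ^ 2 + l ^ 2 - 2 * l * l * cos t).
  assert (Hg : derivable_pt_lim g t0 (2 * l * l * sin t0)).
  { apply is_derive_Reals. unfold g. auto_derive; auto. lra. }
  assert (Hx0 : sqrt (g t0) = sqrt 3 * l).
  { unfold g, t0; cbv beta. rewrite cos_2PI_3. transitivity (sqrt (3 * l ^ 2)); [f_equal; field|].
    rewrite sqrt_mult_alt, sqrt_pow2; lra. }
  assert (Hgp : 0 < g t0) by (apply sqrt_lt_0_alt; rewrite Hx0, sqrt_0; lra).
  destruct (v2_deriv_pos (sqrt (g t0))) as [d2 [Hd2 Hd2p]].
  { rewrite Hx0. split; [lra|]. rewrite <- (Rmult_1_r (sqrt 3)) at 2. nra. }
  pose proof (derivable_pt_lim_comp _ _ _ _ _ (derivable_pt_lim_comp _ _ _ _ _ Hg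
                (derivable_pt_lim_sqrt _ Hgp)) Hd2) as Hvg.
  pose proof (derivable_pt_lim_plus _ _ _ _ _
                (derivable_pt_lim_plus _ _ _ _ _ (derivable_pt_lim_const (1/4 * v2 l + 1/4 * v2 l) t0) Hvg)
                v3_derive_ideal) as HF.
  assert (Hsin : 0 < sin t0) by (apply sin_gt_0; unfold t0; lra).
  assert (HD : 0 < 0 + d2 * (/ (2 * sqrt (g t0)) * (2 * l * l * sin t0)) + 0).
  { rewrite Hx0, Rplus_0_l, Rplus_0_r.
    apply Rmult_lt_0_compat; [lra|]. apply Rmult_lt_0_compat; [apply Rinv_0_lt_compat; nra|].
    repeat apply Rmult_lt_0_compat; lra. }
  destruct (derivable_pt_lim_pos_left _ _ _ HF HD 1 ltac:(lra)) as [h [Hh Hlt]].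
  exists (t0 + h). split; [unfold t0 in *; lra|].
  unfold plus_fct, comp, fct_cte, g in Hlt. unfold site_energy. fold t0. lra.
Qed.

Definition regular_minimizer (l th : R) : Prop :=
  forall l' th', 0 < l' -> 0 < th' <= 2 * PI / 3 -> F l l th <= F l' l' th'.

Lemma optimal_cell_regular_minimizer y l th : optimal_cell v2 v3 y ->
  (forall i, bond y i = l /\ bond_angle y i = th) -> regular_minimizer l th.
Proof.
  intros [Ha Hmin] Hy l' th' Hl' Hth'.
  destruct (regular_cell_energy v2 v3 l' th' Hl' Hth') as [z [Hz Ez]].
  pose proof (Hmin z Hz) as Hle. rewrite (E_cell_regular v2 v3 y l th Ha Hy), Ez in Hle. lra.
Qed.

Lemma regular_minimizer_angle_le l th : regular_minimizer l th ->
  0 < l -> 1 <= 3 * l ^ 2 -> th <= PI -> th <= 2 * PI / 3.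
Proof.
  intros Hmin Hl Hl3 Hth. pose proof PI_gt_3.
  destruct (Rle_or_lt th (2 * PI / 3)) as [|Hgt]; [assumption|].
  pose proof (site_energy_opening_angle l th Hl3 (conj Hgt Hth)).
  pose proof (Hmin l (2 * PI / 3) Hl ltac:(lra)). lra.
Qed.

Lemma regular_minimizer_bond_le_1 l th : regular_minimizer l th ->
  PI / 3 <= th <= 2 * PI / 3 -> l <= 1.
Proof.
  intros Hmin Hth. pose proof PI_gt_3.
  destruct (Rle_or_lt l 1) as [|Hl]; [assumption|].
  pose proof (Hmin 1 th ltac:(lra) ltac:(lra)) as Hle. unfold site_energy in Hle.
  assert (Hc : cos th <= 1/2) by (rewrite <- cos_PI3; apply cos_decr_1; lra).
  assert (H1 : 1 <= sqrt (1 ^ 2 + 1 ^ 2 - 2 * 1 * 1 * cos th)).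
  { rewrite <- sqrt_1 at 1. apply sqrt_le_1_alt. lra. }
  assert (H2 : sqrt (1 ^ 2 + 1 ^ 2 - 2 * 1 * 1 * cos th) <= sqrt (l ^ 2 + l ^ 2 - 2 * l * l * cos th)).
  { apply sqrt_le_1_alt. assert (1 < l * l) by nra. nra. }
  pose proof (v2_incr _ _ H1 H2). pose proof (v2_gt_m1 l ltac:(lra) ltac:(lra)). lra.
Qed.

Lemma regular_minimizer_angle_lt l th : regular_minimizer l th ->
  5/4 < sqrt 3 * l -> l <= 1 -> th <= 2 * PI / 3 -> th < 2 * PI / 3.
Proof.
  intros Hmin Hl Hl1 Hth. pose proof PI_gt_3. pose proof Rlt_sqrt3_0.
  destruct (Rle_lt_or_eq_dec _ _ Hth) as [|Heq]; [assumption|]. subst th.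
  destruct (site_energy_closing_angle l Hl Hl1) as [t [Ht Hlt]].
  pose proof (Hmin l t ltac:(nra) ltac:(lra)). lra.
Qed.

Lemma E_cell_term_bounds y : admissible y -> forall j, (j <= 5)%nat ->
  v2 (bond y j) - 5 <= sum_f_R0 (fun k => v2 (bond y k)) 5 /\
  -6 <= sum_f_R0 (fun k => v2 (dist2nd y k)) 5 /\
  v3 (bond_angle y j) <= sum_f_R0 (fun k => v3 (bond_angle y k)) 5.
Proof.
  intros Ha j Hj.
  pose proof (sum_f_R0_ge_term (fun k => v2 (bond y k)) (-1) 5 j
                (fun k _ => v2_ge_m1 _ (proj1 (Ha k))) Hj).
  pose proof (sum_f_R0_ge_term (fun k => v2 (dist2nd y k)) (-1) 5 0
                (fun k _ => v2_ge_m1 _ (proj2 (Ha k))) ltac:(lia)).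
  pose proof (v2_ge_m1 _ (proj2 (Ha 0%nat))).
  pose proof (sum_f_R0_ge_term (fun k => v3 (bond_angle y k)) 0 5 j
                (fun k _ => v3_ge_0 _ (bond_angle_bound y k)) Hj).
  simpl INR in *. lra.
Qed.

Lemma optimal_cell_energy_le y : optimal_cell v2 v3 y -> E_cell v2 v3 y <= -3 + 6 * v2 (sqrt 3).
Proof.
  intros [_ Hmin]. pose proof PI_gt_3.
  destruct (regular_cell_energy v2 v3 1 (2 * PI / 3) ltac:(lra) ltac:(lra)) as [z [Hz Ez]].
  pose proof (Hmin z Hz) as Hle. rewrite Ez in Hle. unfold site_energy in Hle.
  rewrite cos_2PI_3, v2_at_1, v3_at_ideal in Hle.
  replace (1 ^ 2 + 1 ^ 2 - 2 * 1 * 1 * (-1 / 2)) with 3 in Hle by field. lra.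
Qed.

Variable delta : R.

Hypothesis delta_range : 0 < delta <= 1/5.
Hypothesis v2_short_bond : v2 (1 - delta) > 11 + 12 * v2 (sqrt 3).
Hypothesis v2_long_bond :
  v2 (1 + delta) > -1 + 12 * v2 (sqrt 3) - 12 * v2 (sqrt 3 * (1 - delta) ^ 2).
Hypothesis v3_far_from_ideal : forall th, 0 <= th <= PI ->
  Rabs (th - 2 * PI / 3) >= delta -> v3 th > 6 + 6 * v2 (sqrt 3).
Hypothesis F_strictly_convex : strictly_convex3 (near_ideal delta) F.

Lemma optimal_angle_near_ideal y : optimal_cell v2 v3 y ->
  forall i, Rabs (bond_angle y i - 2 * PI / 3) < delta.
Proof.
  intros Hopt i. pose proof (optimal_cell_energy_le y Hopt) as Hup.
  rewrite bond_angle_mod6. apply Rnot_le_lt. intros Hfar.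
  pose proof (v3_far_from_ideal _ (bond_angle_bound y _) (Rle_ge _ _ Hfar)).
  destruct (E_cell_term_bounds y (proj1 Hopt) (i mod 6) (mod6_le5 i)) as (Hb & Hd & Ht).
  pose proof (v2_ge_m1 _ (proj1 (proj1 Hopt (i mod 6)))).
  unfold E_cell in Hup. lra.
Qed.

Lemma optimal_bond_gt y : optimal_cell v2 v3 y -> forall i, 1 - delta < bond y i.
Proof.
  intros Hopt i. pose proof (optimal_cell_energy_le y Hopt) as Hup.
  rewrite bond_mod6. apply Rnot_le_lt. intros Hshort.
  pose proof (proj1 (proj1 Hopt (i mod 6))) as Hpos.
  pose proof (v2_decr _ _ Hpos Hshort ltac:(lra)).
  destruct (E_cell_term_bounds y (proj1 Hopt) (i mod 6) (mod6_le5 i)) as (Hb & Hd & Ht).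
  pose proof (v3_ge_0 _ (bond_angle_bound y (i mod 6))).
  unfold E_cell in Hup. lra.
Qed.

Lemma optimal_dist2nd_ge y : optimal_cell v2 v3 y ->
  forall k, sqrt 3 * (1 - delta) ^ 2 <= dist2nd y k.
Proof.
  intros Hopt k. rewrite dist2nd_shift, dist2nd_nxt by apply (proj1 Hopt).
  apply third_side_lower_bound; try apply optimal_bond_gt; try apply optimal_angle_near_ideal; assumption.
Qed.

Lemma optimal_bond_lt y : optimal_cell v2 v3 y -> forall i, bond y i < 1 + delta.
Proof.
  intros Hopt i. pose proof (optimal_cell_energy_le y Hopt) as Hup.
  rewrite bond_mod6. apply Rnot_le_lt. intros Hlong.
  pose proof (v2_incr (1 + delta) _ ltac:(lra) Hlong).
  assert (Hd : 6 * v2 (sqrt 3 * (1 - delta) ^ 2) <= sum_f_R0 (fun k => v2 (dist2nd y k)) 5).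
  { assert (H1 : 1 <= sqrt 3 * (1 - delta) ^ 2) by (pose proof sqrt3_bounds; nra).
    pose proof (sum_f_R0_ge_term (fun k => v2 (dist2nd y k)) (v2 (sqrt 3 * (1 - delta) ^ 2)) 5 0
                  (fun k _ => v2_incr _ _ H1 (optimal_dist2nd_ge y Hopt k)) ltac:(lia)).
    pose proof (v2_incr _ _ H1 (optimal_dist2nd_ge y Hopt 0)).
    simpl INR in *. lra. }
  destruct (E_cell_term_bounds y (proj1 Hopt) (i mod 6) (mod6_le5 i)) as (Hb & _ & Ht).
  pose proof (v3_ge_0 _ (bond_angle_bound y (i mod 6))).
  unfold E_cell in Hup. lra.
Qed.

Lemma optimal_site_near_ideal y : optimal_cell v2 v3 y ->
  forall i, near_ideal delta (bond y (nxt i)) (bond y i) (bond_angle y i).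
Proof.
  intros Hopt i.
  assert (Hb : forall k, Rabs (bond y k - 1) < delta).
  { intros k. pose proof (optimal_bond_gt y Hopt k). pose proof (optimal_bond_lt y Hopt k).
    apply Rabs_def1; lra. }
  split; [|split]; auto using optimal_angle_near_ideal.
Qed.

(* Jensen for the strictly convex [F] bounds [E_cell] below by the energy of the
   chair with averaged bond and (clipped) averaged angle, strictly unless all
   sites agree. *)
Lemma optimal_sites_equal y : optimal_cell v2 v3 y -> forall i, (i <= 5)%nat ->
  (bond y (nxt i), bond y i, bond_angle y i) = (bond y (nxt 0), bond y 0%nat, bond_angle y 0%nat).
Proof.
  intros Hopt i Hi. pose proof (optimal_site_near_ideal y Hopt) as Hsite.
  destruct Hopt as [Ha Hmin]. pose proof PI_gt_3.
  set (a := fun i => bond y (nxt i)). set (b := fun i => bond y i).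
  set (c := fun i => bond_angle y i).
  assert (Hab : mean a 5 = mean b 5).
  { unfold mean, a, b. cbn [sum_f_R0 nxt Nat.add]. change (bond y 6) with (bond y 0). lra. }
  destruct (mean_in_convex3 (near_ideal delta) a b c (near_ideal_convex delta) 5 (fun i _ => Hsite i))
    as (_ & Hl & Ht).
  apply Rabs_def2 in Hl, Ht.
  set (tc := Rmin (mean c 5) (2 * PI / 3)).
  assert (Hclip : F (mean b 5) (mean b 5) tc <= F (mean b 5) (mean b 5) (mean c 5)).
  { unfold tc. destruct (Rle_or_lt (mean c 5) (2 * PI / 3)) as [Hle|Hgt].
    - rewrite Rmin_left by assumption. lra.
    - rewrite Rmin_right by lra. apply Rlt_le, site_energy_opening_angle; nra. }
  assert (Htc : 0 < tc <= 2 * PI / 3) by (unfold tc; split; [apply Rmin_glb_lt|apply Rmin_r]; lra).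
  destruct (regular_cell_energy v2 v3 (mean b 5) tc ltac:(lra) Htc) as [z [Hz Ez]].
  pose proof (Hmin z Hz) as Hle.
  assert (Hsum : sum_f_R0 (fun i => F (a i) (b i) (c i)) 5 = E_cell v2 v3 y)
    by (symmetry; apply E_cell_site_sum; exact Ha).
  apply NNPP. intros Hne.
  pose proof (jensen3_strict _ F a b c (near_ideal_convex delta) F_strictly_convex 5
                (fun i _ => Hsite i) (ex_intro _ i (conj Hi Hne))) as Hj.
  rewrite Hab, Hsum in Hj. simpl INR in Hj. lra.
Qed.

Lemma optimal_cell_regular y : optimal_cell v2 v3 y ->
  forall i, bond y i = bond y 0%nat /\ bond_angle y i = bond_angle y 0%nat.
Proof.
  intros Hopt i. rewrite bond_mod6, bond_angle_mod6.
  now injection (optimal_sites_equal y Hopt (i mod 6) (mod6_le5 i)).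
Qed.

Lemma optimal_cell_shape y : optimal_cell v2 v3 y ->
  exists l th, l <= 1 /\ th < 2 * PI / 3 /\ near_ideal delta l l th /\
    regular_minimizer l th /\ forall i, bond y i = l /\ bond_angle y i = th.
Proof.
  intros Hopt. pose proof PI_gt_3. pose proof sqrt3_bounds.
  pose proof (optimal_cell_regular y Hopt) as Hreg.
  exists (bond y 0%nat), (bond_angle y 0%nat).
  pose proof (optimal_cell_regular_minimizer y _ _ Hopt Hreg) as Hmin.
  destruct (optimal_site_near_ideal y Hopt 0) as (_ & Hl & Ht).
  pose proof (Rabs_def2 _ _ Hl). pose proof (Rabs_def2 _ _ Ht). pose proof (bond_angle_bound y 0).
  assert (Hle : bond_angle y 0 <= 2 * PI / 3) by (apply (regular_minimizer_angle_le _ _ Hmin); nra).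
  assert (Hl1 : bond y 0 <= 1) by (apply (regular_minimizer_bond_le_1 _ _ Hmin); lra).
  split; [|split; [|split; [|split]]].
  - exact Hl1.
  - apply (regular_minimizer_angle_lt _ _ Hmin); nra.
  - repeat split; assumption.
  - exact Hmin.
  - exact Hreg.
Qed.

Lemma regular_minimizer_unique l th l' th' :
  near_ideal delta l l th -> near_ideal delta l' l' th' ->
  th <= 2 * PI / 3 -> th' <= 2 * PI / 3 ->
  regular_minimizer l th -> regular_minimizer l' th' -> l = l' /\ th = th'.
Proof.
  intros Hn Hn' Hth Hth' Hmin Hmin'. pose proof PI_gt_3.
  destruct (classic ((l, l, th) = (l', l', th'))) as [E|Hne]; [now injection E|].
  pose proof (F_strictly_convex _ _ _ _ _ _ (1/2) Hn Hn' Hne ltac:(lra)) as Hmid.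
  destruct Hn as (Hl & _ & Ht). destruct Hn' as (Hl' & _ & Ht').
  apply Rabs_def2 in Hl, Ht, Hl', Ht'.
  pose proof (Hmin (1/2 * l + (1 - 1/2) * l') (1/2 * th + (1 - 1/2) * th') ltac:(lra) ltac:(lra)).
  pose proof (Hmin' (1/2 * l + (1 - 1/2) * l') (1/2 * th + (1 - 1/2) * th') ltac:(lra) ltac:(lra)).
  lra.
Qed.

End CellEnergy.

Theorem mainTheorem2 (v2 v3 : R -> R) (delta : R) :
  standing_assumptions v2 v3 delta ->
  exists (lstar thstar : R),
    lstar <= 1 /\ thstar < 2 * PI / 3 /\
    forall y : cell, optimal_cell v2 v3 y ->
      forall i : nat, (i < 6)%nat -> bond y i = lstar /\ bond_angle y i = thstar.
Proof.
  intros (_ & Hge & H1 & Hgt & Hdec & Hinc & Hder & _ & H3ge & H30 & H3gt & Hd3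
          & Hdel & Hi & Hii & Hiii & Hiv).
  pose proof (optimal_cell_shape v2 v3 Hge H1 Hgt Hdec Hinc Hder H3ge H30 H3gt Hd3
                delta Hdel Hi Hii Hiii Hiv) as Hshape.
  destruct (classic (exists y, optimal_cell v2 v3 y)) as [[y0 Hy0]|Hnone].
  - destruct (Hshape y0 Hy0) as (l & th & Hl & Hth & Hn & Hmin & _).
    exists l, th. split; [exact Hl|]. split; [exact Hth|].
    intros y Hy i _.
    destruct (Hshape y Hy) as (l' & th' & _ & Hth' & Hn' & Hmin' & Hy').
    destruct (regular_minimizer_unique v2 v3 delta Hdel Hiv l' th' l th Hn' Hn
                (Rlt_le _ _ Hth') (Rlt_le _ _ Hth) Hmin' Hmin) as [<- <-].
    apply Hy'.
  - exists 1, 0. split; [lra|]. split; [pose proof PI_gt_3; lra|].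
    intros y Hy. exfalso. eauto.
Qed.
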